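(* Let $X$ be a locally finite poset, $R$ a commutative unital ring and $\alpha_1,\dots,\alpha_n$ pairwise commuting idempotents of $I(X,R)$. Then there exists an invertible $\beta\in I(X,R)$ such that $\alpha_i=\beta(\alpha_i)_D\beta^{-1}$ for all $1\le i\le n$.
   Context: $I(X,R)$ is the incidence algebra of the locally finite poset $X$ over $R$: functions $f:X\times X\to R$ with $f(x,y)=0$ unless $x\le y$, with product $(fg)(x,y)=\sum_{x\le z\le y}f(x,z)g(z,y)$. For $f\in I(X,R)$, its diagonal $f_D$ is defined by $f_D(x,x)=f(x,x)$ and $f_D(x,y)=0$ for $x\ne y$. *)

From HB Require Import structures.
From mathcomp Require Import all_boot all_order all_algebra.
Set Implicit Arguments. Unset Strict Implicit. Unset Printing Implicit Defensive.
Import Order.TTheory GRing.Theory.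
Local Open Scope ring_scope.
Local Open Scope order_scope.

(* Local finiteness is witnessed by an interval enumeration
   [itv x y], a duplicate-free list of exactly the z with x <= z <= y
   (see [is_interval_enum]).  Elements of I(X,R) are functions
   f : X -> X -> R with f x y = 0 unless x <= y. *)

Section Incidence.
Context {d : Order.disp_t} (X : porderType d) (R : comPzRingType).

Definition is_interval_enum (itv : X -> X -> seq X) : Prop :=
  forall x y, uniq (itv x y) /\ (forall z, (z \in itv x y) = (x <= z <= y)).

Definition in_incidence (f : X -> X -> R) : Prop :=
  forall x y, ~~ (x <= y) -> f x y = 0%R.

Definition imul (itv : X -> X -> seq X) (f g : X -> X -> R) : X -> X -> R :=
  fun x y => (\sum_(z <- itv x y) f x z * g z y)%R.

Definition ione : X -> X -> R := fun x y => ((x == y)%:R)%R.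

Definition idiag (f : X -> X -> R) : X -> X -> R :=
  fun x y => if x == y then f x x else 0%R.

End Incidence.

From HB Require Import structures.
From mathcomp Require Import all_boot all_order all_algebra.
From Stdlib Require Import FunctionalExtensionality.
Set Implicit Arguments. Unset Strict Implicit. Unset Printing Implicit Defensive.
Import Order.TTheory GRing.Theory.
Local Open Scope ring_scope.

(* Induction on the number of idempotents.  If beta, gamma already conjugate
   alpha_1, ..., alpha_k to their diagonals, then a := gamma alpha_(k+1) beta is
   an idempotent commuting with the diagonals (alpha_i)_D, i <= k, and with the
   same diagonal as alpha_(k+1), since the diagonal map is a homomorphism onto
   a commutative algebra.  The element u := a a_D + (1 - a)(1 - a_D) satisfies
   a u = a a_D = u a_D and has diagonal e^2 + (1 - e)^2 = 1 (e = a(x,x) is an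
   idempotent scalar), hence is invertible; it commutes with every (alpha_i)_D,
   i <= k, so beta u, u^-1 gamma conjugates alpha_1, ..., alpha_(k+1). *)

Section IncidenceAlgebra.
Variables (d : Order.disp_t) (X : porderType d) (R : comPzRingType).
Variables (itv : X -> X -> seq X) (Hitv : is_interval_enum itv).

Local Notation mul := (@imul _ X R itv).
Local Notation one := (@ione _ X R).
Local Notation inc := (@in_incidence _ X R).
Implicit Types f g h p q a b c u v : X -> X -> R.

Definition iadd f g : X -> X -> R := fun x y => f x y + g x y.
Definition isub f g : X -> X -> R := fun x y => f x y - g x y.
Definition izero : X -> X -> R := fun _ _ => 0.

Definition icomm f g := mul f g = mul g f.
Definition iinverse f g := mul f g = one /\ mul g f = one.
Definition iconj b c f := mul (mul b f) c.

Lemma incidence_ext f g : (forall x y, f x y = g x y) -> f = g.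
Proof.
by move=> e; apply: functional_extensionality => x;
   apply: functional_extensionality => y; apply: e.
Qed.

Lemma uniq_itv x y : uniq (itv x y). Proof. by case: (Hitv x y). Qed.

Lemma mem_itv x y z : (z \in itv x y) = (x <= z <= y)%O.
Proof. by case: (Hitv x y). Qed.

Lemma itv_nil x y : ~~ (x <= y)%O -> itv x y = [::].
Proof.
move=> nxy; case E: (itv x y) => [|z s] //.
have := mem_head z s; rewrite -E mem_itv => /andP[xz zy].
by rewrite (le_trans xz zy) in nxy.
Qed.

Lemma size_itv_lt x y z : z \in itv x y -> z != x ->
  (size (itv z y) < size (itv x y))%N.
Proof.
move=> zI zx; move: (zI); rewrite mem_itv => /andP[xz zy].
have xNzy : x \notin itv z y.
  by rewrite mem_itv; apply/negP => /andP[zx' _]; rewrite eq_le zx' xz in zx.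
have := uniq_leq_size (s1 := x :: itv z y) (s2 := itv x y).
rewrite /= xNzy uniq_itv; apply=> // w; rewrite inE => /predU1P[->|].
  by rewrite mem_itv lexx (le_trans xz zy).
by rewrite !mem_itv => /andP[zw ->]; rewrite (le_trans xz zw).
Qed.

Lemma size_itv_gt0 x y : (x <= y)%O -> (0 < size (itv x y))%N.
Proof. by move=> xy; have := mem_itv x y x; rewrite lexx xy; case: (itv x y). Qed.

Lemma big_itv1 x (F : X -> R) : \sum_(z <- itv x x) F z = F x.
Proof.
rewrite (bigD1_seq x) ?uniq_itv ?mem_itv ?lexx //= big1_seq ?addr0 //.
by move=> z /andP[zx]; rewrite mem_itv => xzx; rewrite (le_anti xzx) eqxx in zx.
Qed.

Lemma big_uniq_widen (s t : seq X) (F : X -> R) : uniq s -> uniq t ->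
  {subset s <= t} -> (forall w, w \in t -> w \notin s -> F w = 0) ->
  \sum_(w <- s) F w = \sum_(w <- t) F w.
Proof.
move=> us ut st F0.
rewrite [RHS](bigID (mem s)) /= [X in _ + X]big1_seq ?addr0; last first.
  by move=> w /andP[ws wt]; rewrite F0.
rewrite -[RHS]big_filter; apply/perm_big/uniq_perm; rewrite ?filter_uniq //.
by move=> w; rewrite mem_filter; case ws: (w \in s); rewrite //= st.
Qed.

Lemma imul_out f g x y : ~~ (x <= y)%O -> mul f g x y = 0.
Proof. by move=> nxy; rewrite /imul itv_nil // big_nil. Qed.

Lemma imul_diag f g x : mul f g x x = f x x * g x x.
Proof. exact: big_itv1. Qed.

Lemma inc_mul f g : inc (mul f g). Proof. by move=> x y; apply: imul_out. Qed.

Lemma inc_one : inc one.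
Proof. by move=> x y; rewrite /ione; case: eqP => // ->; rewrite lexx. Qed.

Lemma inc_idiag f : inc (idiag f).
Proof. by move=> x y; rewrite /idiag; case: eqP => // ->; rewrite lexx. Qed.

Lemma inc_add f g : inc f -> inc g -> inc (iadd f g).
Proof. by move=> hf hg x y xy; rewrite /iadd hf ?hg ?addr0. Qed.

Lemma inc_sub f g : inc f -> inc g -> inc (isub f g).
Proof. by move=> hf hg x y xy; rewrite /isub hf ?hg ?subrr. Qed.

Hint Resolve inc_mul inc_one inc_idiag inc_add inc_sub : incdb.

Lemma imul_widenl f g x y z : inc g -> (x <= z)%O -> (z <= y)%O ->
  mul f g x z = \sum_(w <- itv x y) f x w * g w z.
Proof.
move=> hg xz zy; apply: big_uniq_widen; rewrite ?uniq_itv //.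
  by move=> w; rewrite !mem_itv => /andP[-> wz]; rewrite (le_trans wz zy).
by move=> w; rewrite !mem_itv => /andP[-> _] nwz; rewrite hg ?mulr0.
Qed.

Lemma imul_widenr f g x y w : inc f -> (x <= w)%O -> (w <= y)%O ->
  mul f g w y = \sum_(z <- itv x y) f w z * g z y.
Proof.
move=> hf xw wy; apply: big_uniq_widen; rewrite ?uniq_itv //.
  by move=> z; rewrite !mem_itv => /andP[wz ->]; rewrite (le_trans xw wz).
move=> z; rewrite !mem_itv => /andP[_ ->]; rewrite andbT => nwz.
by rewrite hf ?mul0r.
Qed.

Lemma imulA f g h : inc g -> mul (mul f g) h = mul f (mul g h).
Proof.
move=> hg; apply: incidence_ext => x y; rewrite {1 3}/imul.
transitivity (\sum_(z <- itv x y) \sum_(w <- itv x y) f x w * g w z * h z y).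
  apply: eq_big_seq => z; rewrite mem_itv => /andP[xz zy].
  by rewrite (imul_widenl f hg xz zy) mulr_suml.
rewrite exchange_big; apply: eq_big_seq => w; rewrite mem_itv => /andP[xw wy].
by rewrite (imul_widenr h hg xw wy) mulr_sumr; apply: eq_bigr => z _; rewrite mulrA.
Qed.

Lemma imul1f f : inc f -> mul one f = f.
Proof.
move=> hf; apply: incidence_ext => x y.
have [xy|nxy] := boolP (x <= y)%O; last by rewrite imul_out // hf.
rewrite /imul (bigD1_seq x) ?uniq_itv ?mem_itv ?lexx ?xy //= big1_seq.
  by rewrite /ione eqxx mul1r addr0.
by move=> z /andP[zx _]; rewrite /ione eq_sym (negbTE zx) mul0r.
Qed.

Lemma imulf1 f : inc f -> mul f one = f.
Proof.
move=> hf; apply: incidence_ext => x y.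
have [xy|nxy] := boolP (x <= y)%O; last by rewrite imul_out // hf.
rewrite /imul (bigD1_seq y) ?uniq_itv ?mem_itv ?lexx ?xy //= big1_seq.
  by rewrite /ione eqxx mulr1 addr0.
by move=> z /andP[zy _]; rewrite /ione (negbTE zy) mulr0.
Qed.

Lemma imulDr f g h : mul f (iadd g h) = iadd (mul f g) (mul f h).
Proof.
apply: incidence_ext => x y; rewrite /iadd /imul -big_split.
by apply: eq_bigr => z _; rewrite mulrDr.
Qed.

Lemma imulDl f g h : mul (iadd g h) f = iadd (mul g f) (mul h f).
Proof.
apply: incidence_ext => x y; rewrite /iadd /imul -big_split.
by apply: eq_bigr => z _; rewrite mulrDl.
Qed.

Lemma imulBr f g h : mul f (isub g h) = isub (mul f g) (mul f h).
Proof.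
apply: incidence_ext => x y; rewrite /isub /imul -sumrB.
by apply: eq_bigr => z _; rewrite mulrBr.
Qed.

Lemma imulBl f g h : mul (isub g h) f = isub (mul g f) (mul h f).
Proof.
apply: incidence_ext => x y; rewrite /isub /imul -sumrB.
by apply: eq_bigr => z _; rewrite mulrBl.
Qed.

Lemma isubff f : isub f f = izero.
Proof. by apply: incidence_ext => x y; rewrite /isub subrr. Qed.

Lemma imul0f f : mul izero f = izero.
Proof. by apply: incidence_ext => x y; rewrite /imul big1 // => z _; rewrite mul0r. Qed.

Lemma imulf0 f : mul f izero = izero.
Proof. by apply: incidence_ext => x y; rewrite /imul big1 // => z _; rewrite mulr0. Qed.

Lemma iaddf0 f : iadd f izero = f.
Proof. by apply: incidence_ext => x y; rewrite /iadd addr0. Qed.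

Lemma idiagM f g : idiag (mul f g) = mul (idiag f) (idiag g).
Proof.
apply: incidence_ext => x y; rewrite /idiag; case: eqP => [<-|/eqP xy].
  by rewrite !imul_diag eqxx.
rewrite /imul big1 // => z _; case: (x =P z) => [<-|]; last by rewrite mul0r.
by rewrite (negbTE xy) mulr0.
Qed.

Lemma idiag1 : idiag one = one.
Proof.
by apply: incidence_ext => x y; rewrite /idiag /ione; case: eqP => // ->; rewrite eqxx.
Qed.

Lemma icomm_idiag f g : icomm (idiag f) (idiag g).
Proof.
rewrite /icomm -!idiagM; apply: incidence_ext => x y.
by rewrite /idiag; case: eqP => // _; rewrite !imul_diag mulrC.
Qed.

Lemma icomm1r p : inc p -> icomm p one.
Proof. by move=> hp; rewrite /icomm imulf1 ?imul1f. Qed.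

Lemma icommMr p q r : inc p -> inc q -> inc r -> icomm p q -> icomm p r ->
  icomm p (mul q r).
Proof.
by move=> hp hq hr pq pr; rewrite /icomm -imulA // pq imulA // pr -imulA.
Qed.

Lemma icommDr p q r : icomm p q -> icomm p r -> icomm p (iadd q r).
Proof. by move=> pq pr; rewrite /icomm imulDl imulDr pq pr. Qed.

Lemma icommBr p q r : icomm p q -> icomm p r -> icomm p (isub q r).
Proof. by move=> pq pr; rewrite /icomm imulBl imulBr pq pr. Qed.

Lemma iconjK b c f : inc b -> inc c -> inc f -> mul c b = one ->
  iconj c b (iconj b c f) = f.
Proof.
move=> hb hc hf cb; rewrite /iconj !imulA ?cb ?imulf1; auto with incdb.
by rewrite -imulA // cb imul1f.
Qed.

Lemma iconjM b c p q : inc b -> inc c -> inc p -> inc q -> mul b c = one ->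
  mul (iconj c b p) (iconj c b q) = iconj c b (mul p q).
Proof.
move=> hb hc hp hq bc; rewrite /iconj !imulA; auto with incdb.
by rewrite -[mul b (mul c _)]imulA // bc imul1f; auto with incdb.
Qed.

Lemma iconj_comp b c u v f : inc b -> inc c -> inc u -> inc v -> inc f ->
  iconj (mul b u) (mul v c) f = iconj b c (iconj u v f).
Proof. by move=> *; rewrite /iconj !imulA; auto with incdb. Qed.

Lemma iconj_intertwine u v p q : inc u -> inc p -> mul u v = one ->
  mul p u = mul u q -> iconj u v q = p.
Proof. by move=> hu hp uv pu; rewrite /iconj -pu imulA // uv imulf1. Qed.

Lemma idiag_iconj b c f : mul c b = one -> idiag (iconj c b f) = idiag f.
Proof.
move=> cb; rewrite /iconj !idiagM icomm_idiag (imulA _ _ (inc_idiag c)).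
by rewrite -idiagM cb idiag1 (imulf1 (inc_idiag f)).
Qed.

Section UnitDiagonalInverse.
Variable f : X -> X -> R.
Hypothesis f_diag1 : forall x, f x x = 1.

(* The recursion only visits strictly smaller intervals, so the fuel
   [size (itv x y)] always suffices. *)
Fixpoint rinv_fuel (k : nat) (x y : X) : R :=
  if k is k'.+1 then
    if x == y then 1 else - \sum_(z <- itv x y | z != x) f x z * rinv_fuel k' z y
  else 0.

Definition rinv x y := rinv_fuel (size (itv x y)) x y.

Lemma rinv_fuel_out k x y : ~~ (x <= y)%O -> rinv_fuel k x y = 0.
Proof.
case: k => //= k nxy; rewrite itv_nil // big_nil oppr0.
by case: eqP nxy => // ->; rewrite lexx.
Qed.

Lemma rinv_fuel_stable k k' x y : (size (itv x y) <= k)%N ->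
  (size (itv x y) <= k')%N -> rinv_fuel k x y = rinv_fuel k' x y.
Proof.
elim: k k' x y => [|k IH] [|k'] x y hk hk' //.
all: have [xy|nxy] := boolP (x <= y)%O; last by rewrite !rinv_fuel_out.
- by move: hk; rewrite leqNgt size_itv_gt0.
- by move: hk'; rewrite leqNgt size_itv_gt0.
rewrite /=; case: eqP => [//|_]; congr (- _).
rewrite [LHS]big_seq_cond [RHS]big_seq_cond; apply: eq_bigr => z /andP[zI zx].
have lt := size_itv_lt zI zx.
by rewrite (IH k') // -ltnS; [apply: leq_trans hk | apply: leq_trans hk'].
Qed.

Lemma rinv_rec x y : x != y ->
  rinv x y = - \sum_(z <- itv x y | z != x) f x z * rinv z y.
Proof.
move=> xy; rewrite /rinv; case E: (size (itv x y)) => [|k].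
  by rewrite (size0nil E) big_nil oppr0.
rewrite /= (negbTE xy); congr (- _).
rewrite [LHS]big_seq_cond [RHS]big_seq_cond; apply: eq_bigr => z /andP[zI zx].
have := size_itv_lt zI zx; rewrite E ltnS => zy_k.
by rewrite (@rinv_fuel_stable k (size (itv z y))).
Qed.

Lemma rinv_diag x : rinv x x = 1.
Proof.
rewrite /rinv; case E: (size (itv x x)) => [|k] /=; last by rewrite eqxx.
by have := size_itv_gt0 (lexx x); rewrite E.
Qed.

Lemma inc_rinv : inc rinv.
Proof. by move=> x y; apply: rinv_fuel_out. Qed.

Lemma imul_rinv : mul f rinv = one.
Proof.
apply: incidence_ext => x y.
have [xy|nxy] := boolP (x <= y)%O; last by rewrite imul_out // inc_one.
have [<-|xNy] := eqVneq x y.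
  by rewrite imul_diag f_diag1 rinv_diag mul1r /ione eqxx.
rewrite /imul (bigD1_seq x) ?uniq_itv ?mem_itv ?lexx ?xy //= f_diag1 mul1r.
by rewrite rinv_rec // addNr /ione (negbTE xNy).
Qed.

End UnitDiagonalInverse.

Lemma unit_diag_inverse f : inc f -> (forall x, f x x = 1) ->
  exists g, inc g /\ iinverse f g.
Proof.
move=> hf f1; have hg := inc_rinv f; exists (rinv f); split=> //.
split; first exact: imul_rinv.
have g1 x : rinv f x x = 1 by apply: rinv_diag.
have gg_f : rinv (rinv f) = f.
  rewrite -[RHS](imulf1 hf) -(imul_rinv g1) -imulA //.
  by rewrite (imul_rinv f1) imul1f //; apply: inc_rinv.
by rewrite -{2}gg_f (imul_rinv g1).
Qed.

Lemma iinverseM b c u v : inc b -> inc c -> inc u -> inc v ->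
  iinverse b c -> iinverse u v -> iinverse (mul b u) (mul v c).
Proof.
move=> hb hc hu hv [bc cb] [uv vu]; split.
  by rewrite imulA // -[mul u (mul v c)]imulA // uv imul1f.
by rewrite imulA // -[mul c (mul b u)]imulA // cb imul1f.
Qed.

Definition intertwiner a :=
  iadd (mul a (idiag a)) (mul (isub one a) (isub one (idiag a))).

Lemma inc_intertwiner a : inc (intertwiner a).
Proof. by rewrite /intertwiner; auto with incdb. Qed.

Lemma intertwiner_diag a : mul a a = a -> forall x, intertwiner a x x = 1.
Proof.
move=> aa x; have e2 : a x x * a x x = a x x by rewrite -imul_diag aa.
rewrite /intertwiner /iadd !imul_diag /isub /idiag /ione eqxx e2.
by rewrite mulrBl mul1r mulrBr mulr1 e2 subrr subr0 addrC subrK.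
Qed.

Lemma intertwinerP a : inc a -> mul a a = a ->
  mul a (intertwiner a) = mul (intertwiner a) (idiag a).
Proof.
move=> ha aa; have aDaD : mul (idiag a) (idiag a) = idiag a by rewrite -idiagM aa.
transitivity (mul a (idiag a)).
  rewrite imulDr -!imulA; auto with incdb.
  by rewrite aa (imulBr a one a) imulf1 // aa isubff imul0f iaddf0.
rewrite imulDl !imulA; auto with incdb.
rewrite aDaD (imulBl (idiag a) one) (imul1f (inc_idiag a)) aDaD.
by rewrite isubff imulf0 iaddf0.
Qed.

Lemma intertwiner_comm a p : inc a -> inc p -> icomm p a -> icomm p (idiag a) ->
  icomm p (intertwiner a).
Proof.
move=> ha hp pa pD; have p1 := icomm1r hp.
apply: icommDr; apply: icommMr; auto using icommBr with incdb.
Qed.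

Lemma diagonalize_extend (P : (X -> X -> R) -> Prop) a b c :
  inc a -> mul a a = a -> (forall g, P g -> icomm a g) ->
  inc b -> inc c -> iinverse b c -> (forall g, P g -> g = iconj b c (idiag g)) ->
  exists b' c', [/\ inc b', inc c', iinverse b' c', a = iconj b' c' (idiag a)
                  & forall g, P g -> g = iconj b' c' (idiag g)].
Proof.
move=> ha aa aP hb hc bc_inv Pconj; have [bc cb] := bc_inv.
have Pinc g : P g -> inc g by move=> /Pconj ->; apply: inc_mul.
pose a' := iconj c b a.
have ha' : inc a' by apply: inc_mul.
have a'a' : mul a' a' = a' by rewrite iconjM // aa.
have a'D : idiag a' = idiag a by apply: idiag_iconj.
have Pdiag_a' g : P g -> icomm (idiag g) a'.
  move=> Pg; have hg := Pinc g Pg.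
  have -> : idiag g = iconj c b g.
    by rewrite {2}(Pconj g Pg) (iconjK hb hc (inc_idiag g) cb).
  by rewrite /icomm !iconjM // (aP g Pg).
pose u := intertwiner a'; have hu : inc u by apply: inc_intertwiner.
have [v [hv uv_inv]] := unit_diag_inverse hu (intertwiner_diag a'a').
have [uv _] := uv_inv.
exists (mul b u), (mul v c); split; try exact: inc_mul.
- exact: iinverseM hb hc hu hv bc_inv uv_inv.
- rewrite (iconj_comp hb hc hu hv (inc_idiag a)) -a'D.
  by rewrite (iconj_intertwine hu ha' uv (intertwinerP ha' a'a')) iconjK.
move=> g Pg.
have uD : icomm (idiag g) u.
  exact: intertwiner_comm ha' (inc_idiag g) (Pdiag_a' g Pg) (icomm_idiag g a').
rewrite (iconj_comp hb hc hu hv (inc_idiag g)).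
by rewrite (iconj_intertwine hu (inc_idiag g) uv uD) -(Pconj g Pg).
Qed.

Lemma diagonalize_prefix n (alpha : 'I_n -> X -> X -> R) k :
  (forall i, inc (alpha i)) -> (forall i, mul (alpha i) (alpha i) = alpha i) ->
  (forall i j, icomm (alpha i) (alpha j)) -> (k <= n)%N ->
  exists b c, [/\ inc b, inc c, iinverse b c &
    forall i : 'I_n, (i < k)%N -> alpha i = iconj b c (idiag (alpha i))].
Proof.
move=> inc_alpha idem_alpha comm_alpha; elim: k => [|k IH] kn.
  have one1 := imul1f inc_one.
  by exists one, one; split; try exact: inc_one.
have [b [c [hb hc bc conj_lt_k]]] := IH (ltnW kn).
pose P g := exists2 i : 'I_n, (i < k)%N & g = alpha i.
have comm_P g : P g -> icomm (alpha (Ordinal kn)) g by move=> [i _ ->].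
have conj_P g : P g -> g = iconj b c (idiag g) by move=> [i ik ->]; apply: conj_lt_k.
have [b' [c' [hb' hc' bc' conj_k conj_P']]] :=
  diagonalize_extend (inc_alpha _) (idem_alpha _) comm_P hb hc bc conj_P.
exists b', c'; split=> // i; rewrite ltnS leq_eqVlt => /predU1P[ik|ik].
  by have -> : i = Ordinal kn by apply: val_inj.
by apply: conj_P'; exists i.
Qed.

End IncidenceAlgebra.

Theorem lemma5p4 (d : Order.disp_t) (X : porderType d) (R : comPzRingType)
  (itv : X -> X -> seq X) (Hitv : is_interval_enum itv)
  (n : nat) (alpha : 'I_n -> X -> X -> R)
  (Halpha : forall i, in_incidence (alpha i))
  (Hidem : forall i, imul itv (alpha i) (alpha i) = alpha i)
  (Hcomm : forall i j, imul itv (alpha i) (alpha j) = imul itv (alpha j) (alpha i)) :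
  exists beta gamma : X -> X -> R,
    [/\ in_incidence beta, in_incidence gamma,
        imul itv beta gamma = @ione _ X R, imul itv gamma beta = @ione _ X R &
        forall i, alpha i = imul itv (imul itv beta (idiag (alpha i))) gamma].
Proof.
have [b [c [hb hc [bc cb] conj_alpha]]] :=
  diagonalize_prefix Hitv Halpha Hidem Hcomm (leqnn n).
by exists b, c; split=> // i; apply: conj_alpha.
Qed.
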